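(* Let $\xi=e^{i\pi/5}$. Let $n\ge3$ and let $(n_0,\dots,n_9)\in\mathbb{N}_0^{10}$ with $\sum_{j=0}^9 n_j=n$ and $\sum_{j=0}^9 n_j\xi^j\in\mathbb{R}$. Then there exist $(m_0,\dots,m_9),(k_0,\dots,k_9)\in\mathbb{N}_0^{10}$, neither identically zero, with $m_j+k_j=n_j$ for all $j$, such that $\sum_j m_j\xi^j\in\mathbb{R}$ and $\sum_j k_j\xi^j\in\mathbb{R}$. In other words, no real-valued combination of $n\ge3$ tenth roots of unity (counted with multiplicity) is nontrivial.
   Context: A combination $\sum_j n_j\xi^j$ ($n_j\in\mathbb{N}_0$) with real value is called reducible if its multiset of roots can be split into two nonempty sub-multisets each having real sum, and nontrivial otherwise; $\sum_j n_j$ is its level. *)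

From Stdlib Require Import Reals List.
From Coquelicot Require Import Coquelicot.
Import ListNotations.

Definition xi : C := (cos (PI / 5), sin (PI / 5)).

Definition nsum10 (f : nat -> nat) : nat :=
  fold_right Nat.add 0%nat (map f (seq 0 10)).

Definition comb10 (c : nat -> nat) : C :=
  fold_right Cplus (RtoC 0) (map (fun j => Cmult (RtoC (INR (c j))) (Cpow xi j)) (seq 0 10)).

Definition is_real (z : C) : Prop := Im z = 0%R.

From Stdlib Require Import Reals List Lra Lia ZArith.
From Coquelicot Require Import Coquelicot.
Open Scope R_scope.

(* Since xi^5 = -1, Im (xi^j) vanishes for j = 0, 5 and is +-sin (PI/5) or
   +-sin (2 PI/5) otherwise, and sin (2 PI/5) = phi sin (PI/5) with phi = 2 cos (PI/5)
   the golden ratio.  As phi is irrational, sum_j n_j xi^j is real exactly when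
   n_1 + n_4 = n_6 + n_9 and n_2 + n_3 = n_7 + n_8.  Every nonzero solution of these
   two balance equations contains one of weight 1 or 2 (xi^0, xi^5, or xi^i + xi^i'
   with i in {1,4}, i' in {6,9} or i in {2,3}, i' in {7,8}); when n >= 3 the
   complement is again a nonzero solution. *)

Lemma Cpow_cos_sin (t : R) (j : nat) :
  Cpow (cos t, sin t) j = (cos (INR j * t), sin (INR j * t)).
Proof.
  induction j as [|j IH].
  - rewrite Rmult_0_l, cos_0, sin_0. reflexivity.
  - rewrite Cpow_S, IH, S_INR, Rmult_plus_distr_r, Rmult_1_l, Rplus_comm, cos_plus, sin_plus.
    unfold Cmult; simpl. f_equal; ring.
Qed.

Lemma Im_sum_real_scal (a : nat -> R) (z : nat -> C) (l : list nat) :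
  Im (fold_right Cplus (RtoC 0) (map (fun j => Cmult (RtoC (a j)) (z j)) l)) =
  fold_right Rplus 0 (map (fun j => a j * Im (z j)) l).
Proof.
  induction l as [|j l IH]; simpl; [reflexivity|].
  rewrite <- IH. unfold Im at 1 2; simpl. ring.
Qed.

(* Descent: a * a + a * b - b * b is odd unless a and b are both even. *)
Lemma Z_golden_form_eq0 (a b : Z) : (a * a + a * b - b * b = 0)%Z -> a = 0%Z /\ b = 0%Z.
Proof.
  remember (Z.abs_nat a + Z.abs_nat b)%nat as N eqn:HN.
  revert a b HN. induction N as [N IH] using lt_wf_ind. intros a b HN Hab.
  assert (Heven : Z.even (a * a + a * b - b * b) = true) by (rewrite Hab; reflexivity).
  rewrite Z.even_sub, Z.even_add, !Z.even_mul in Heven.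
  destruct (Z.even a) eqn:Ha; destruct (Z.even b) eqn:Hb; try discriminate Heven.
  apply Z.even_spec in Ha as [x ->]. apply Z.even_spec in Hb as [y ->].
  assert (Hxy : x = 0%Z /\ y = 0%Z).
  { destruct (Z.eq_dec x 0), (Z.eq_dec y 0); [lia | ..];
      (apply (IH (Z.abs_nat x + Z.abs_nat y)%nat); [lia | reflexivity | nia]). }
  lia.
Qed.

Lemma golden_Z_lin_indep (phi : R) (a b : Z) :
  phi * phi = phi + 1 -> IZR a + phi * IZR b = 0 -> a = 0%Z /\ b = 0%Z.
Proof.
  intros Hphi Hab. apply Z_golden_form_eq0, eq_IZR.
  rewrite minus_IZR, plus_IZR, !mult_IZR.
  replace (IZR a) with (- (phi * IZR b)) by lra.
  replace (- (phi * IZR b) * - (phi * IZR b) + - (phi * IZR b) * IZR b - IZR b * IZR b)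
    with (IZR b * IZR b * (phi * phi - phi - 1)) by ring.
  rewrite Hphi. ring.
Qed.

Lemma list_sum_map_neq0 (f : nat -> nat) (l : list nat) :
  list_sum (map f l) <> 0%nat -> exists j, In j l /\ f j <> 0%nat.
Proof.
  induction l as [|j l IH]; simpl; [lia|]. intro H.
  destruct (Nat.eq_dec (f j) 0) as [Hj|Hj].
  - destruct IH as (i & Hi & Hfi); [lia|]. exists i. auto.
  - exists j. auto.
Qed.

Lemma list_sum_map_sub (f g : nat -> nat) (l : list nat) :
  (forall j, (g j <= f j)%nat) ->
  (list_sum (map (fun j => f j - g j) l) + list_sum (map g l))%nat = list_sum (map f l).
Proof.
  intro Hle. induction l as [|j l IH]; simpl; [reflexivity|].
  specialize (Hle j). lia.
Qed.

Lemma Im_xi_pow (j : nat) : Im (Cpow xi j) = sin (INR j * (PI / 5)).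
Proof. unfold xi. rewrite Cpow_cos_sin. reflexivity. Qed.

Lemma golden_ratio_two_cos_PI5 :
  2 * cos (PI / 5) * (2 * cos (PI / 5)) = 2 * cos (PI / 5) + 1.
Proof.
  set (t := PI / 5).
  assert (Hs : 0 < sin t) by (apply sin_gt_0; unfold t; pose proof PI_RGT_0; lra).
  (* sin (3 t) = sin (PI - 3 t) = sin (2 t), then divide by sin t. *)
  assert (H3 : sin (2 * t + t) = sin (2 * t))
    by (rewrite <- sin_PI_x; f_equal; unfold t; field).
  rewrite sin_plus, sin_2a, cos_2a_cos in H3.
  apply Rmult_eq_reg_l with (sin t); [nra | lra].
Qed.

Lemma Im_comb10 (d : nat -> nat) :
  Im (comb10 d) = sin (PI / 5) *
    ((INR (d 1%nat) + INR (d 4%nat) - INR (d 6%nat) - INR (d 9%nat))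
     + 2 * cos (PI / 5) * (INR (d 2%nat) + INR (d 3%nat) - INR (d 7%nat) - INR (d 8%nat))).
Proof.
  set (t := PI / 5).
  assert (Hsin : forall (j : nat) (x : R), INR j * t = x -> Im (Cpow xi j) = sin x)
    by (intros j x <-; apply Im_xi_pow).
  assert (HPI : PI = 5 * t) by (unfold t; field).
  unfold comb10; rewrite Im_sum_real_scal; cbn [seq map fold_right].
  rewrite (Hsin 0%nat 0), (Hsin 1%nat t), (Hsin 2%nat (2 * t)), (Hsin 3%nat (PI - 2 * t)),
    (Hsin 4%nat (PI - t)), (Hsin 5%nat PI), (Hsin 6%nat (t + PI)), (Hsin 7%nat (2 * t + PI)),
    (Hsin 8%nat ((PI - 2 * t) + PI)), (Hsin 9%nat ((PI - t) + PI))
    by (rewrite ?HPI; simpl; ring).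
  rewrite !neg_sin, !sin_PI_x, sin_0, sin_PI, sin_2a.
  ring.
Qed.

Definition balanced (d : nat -> nat) : Prop :=
  (d 1 + d 4 = d 6 + d 9 /\ d 2 + d 3 = d 7 + d 8)%nat.

Lemma is_real_comb10 (d : nat -> nat) : is_real (comb10 d) <-> balanced d.
Proof.
  unfold is_real, balanced. rewrite Im_comb10.
  set (A := (Z.of_nat (d 1%nat) + Z.of_nat (d 4%nat) - Z.of_nat (d 6%nat) - Z.of_nat (d 9%nat))%Z).
  set (B := (Z.of_nat (d 2%nat) + Z.of_nat (d 3%nat) - Z.of_nat (d 7%nat) - Z.of_nat (d 8%nat))%Z).
  replace (INR (d 1%nat) + INR (d 4%nat) - INR (d 6%nat) - INR (d 9%nat)) with (IZR A)
    by (unfold A; rewrite !minus_IZR, !plus_IZR, <- !INR_IZR_INZ; reflexivity).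
  replace (INR (d 2%nat) + INR (d 3%nat) - INR (d 7%nat) - INR (d 8%nat)) with (IZR B)
    by (unfold B; rewrite !minus_IZR, !plus_IZR, <- !INR_IZR_INZ; reflexivity).
  assert (Hs : 0 < sin (PI / 5)) by (apply sin_gt_0; pose proof PI_RGT_0; lra).
  split.
  - intro H.
    destruct (golden_Z_lin_indep (2 * cos (PI / 5)) A B) as [HA HB].
    + apply golden_ratio_two_cos_PI5.
    + apply Rmult_eq_reg_l with (sin (PI / 5)); lra.
    + unfold A, B in *. lia.
  - intros [H1 H2].
    replace A with 0%Z by (unfold A; lia). replace B with 0%Z by (unfold B; lia). ring.
Qed.

Lemma balanced_sub (c m : nat -> nat) :
  (forall j, (m j <= c j)%nat) -> balanced c -> balanced m -> balanced (fun j => c j - m j)%nat.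
Proof.
  unfold balanced. intros Hle Hc Hm.
  pose proof (Hle 1%nat); pose proof (Hle 2%nat); pose proof (Hle 3%nat); pose proof (Hle 4%nat);
  pose proof (Hle 6%nat); pose proof (Hle 7%nat); pose proof (Hle 8%nat); pose proof (Hle 9%nat).
  lia.
Qed.

Lemma nsum10_neq0 (f : nat -> nat) : nsum10 f <> 0%nat -> exists j, (j < 10)%nat /\ f j <> 0%nat.
Proof.
  intro H. destruct (list_sum_map_neq0 f (seq 0 10) H) as (j & Hj & Hfj).
  apply in_seq in Hj. exists j. split; [lia | exact Hfj].
Qed.

Definition unit_vec (i : nat) : nat -> nat := fun j => if Nat.eqb j i then 1%nat else 0%nat.

Definition pair_vec (i i' : nat) : nat -> nat := fun j => (unit_vec i j + unit_vec i' j)%nat.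

Lemma unit_vec_le (c : nat -> nat) (i : nat) : c i <> 0%nat -> forall j, (unit_vec i j <= c j)%nat.
Proof. intros Hi j. unfold unit_vec. destruct (Nat.eqb_spec j i); subst; lia. Qed.

Lemma pair_vec_le (c : nat -> nat) (i i' : nat) :
  i <> i' -> c i <> 0%nat -> c i' <> 0%nat -> forall j, (pair_vec i i' j <= c j)%nat.
Proof.
  intros Hii' Hi Hi' j. unfold pair_vec, unit_vec.
  destruct (Nat.eqb_spec j i), (Nat.eqb_spec j i'); subst; lia.
Qed.

Local Ltac pick_sub m :=
  exists m; split; [first [apply unit_vec_le | apply pair_vec_le]; lia
                   | cbv [balanced nsum10 unit_vec pair_vec]; simpl; lia].

Lemma balanced_small_sub (c : nat -> nat) :
  balanced c -> nsum10 c <> 0%nat ->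
  exists m, (forall j, (m j <= c j)%nat) /\ balanced m /\ (1 <= nsum10 m <= 2)%nat.
Proof.
  intros Hc Hsum. unfold balanced in Hc. unfold nsum10 in Hsum; simpl in Hsum.
  destruct (Nat.eq_dec (c 0%nat) 0); [| pick_sub (unit_vec 0)].
  destruct (Nat.eq_dec (c 5%nat) 0); [| pick_sub (unit_vec 5)].
  destruct (Nat.eq_dec (c 1%nat + c 4%nat) 0).
  2: destruct (Nat.eq_dec (c 1%nat) 0), (Nat.eq_dec (c 6%nat) 0);
       [pick_sub (pair_vec 4 9) | pick_sub (pair_vec 4 6)
       | pick_sub (pair_vec 1 9) | pick_sub (pair_vec 1 6)].
  destruct (Nat.eq_dec (c 2%nat + c 3%nat) 0).
  2: destruct (Nat.eq_dec (c 2%nat) 0), (Nat.eq_dec (c 7%nat) 0);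
       [pick_sub (pair_vec 3 8) | pick_sub (pair_vec 3 7)
       | pick_sub (pair_vec 2 8) | pick_sub (pair_vec 2 7)].
  lia.
Qed.

Theorem theorem6p6 :
  forall (n : nat) (c : nat -> nat),
    (3 <= n)%nat ->
    nsum10 c = n ->
    is_real (comb10 c) ->
    exists m k : nat -> nat,
      (exists j, (j < 10)%nat /\ m j <> 0%nat) /\
      (exists j, (j < 10)%nat /\ k j <> 0%nat) /\
      (forall j, (j < 10)%nat -> (m j + k j)%nat = c j) /\
      is_real (comb10 m) /\ is_real (comb10 k).
Proof.
  intros n c Hn Hsum Hreal. apply is_real_comb10 in Hreal.
  destruct (balanced_small_sub c Hreal) as (m & Hle & Hm & Hsize); [lia|].
  assert (Hsplit : (nsum10 (fun j => c j - m j) + nsum10 m)%nat = nsum10 c)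
    by exact (list_sum_map_sub c m (seq 0 10) Hle).
  exists m, (fun j => c j - m j)%nat. repeat split.
  - apply nsum10_neq0. lia.
  - apply nsum10_neq0. lia.
  - intros j _. specialize (Hle j). lia.
  - apply is_real_comb10, Hm.
  - apply is_real_comb10, balanced_sub; assumption.
Qed.
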